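(* Let $q$ be a power of $2$ and $v\ge1$ an integer. In the affine space $AG(2v,q)$ over $\mathbb{F}_q$ let $K=\{(a_1,a_1^2,a_2,a_2^2,\dots,a_v,a_v^2): a_1,\dots,a_v\in\mathbb{F}_q\}$ and $A=AG(2v,q)\setminus K$. Then for every point $X\in A$, the number of lines of $AG(2v,q)$ through $X$ that are entirely contained in $A$ equals $B_{q,v}-q^v+\frac12(q-2)$, where $B_{q,v}=\frac{q^{2v}-1}{q-1}$.
   Context: Points of $AG(2v,q)$ are the vectors of $\mathbb{F}_q^{2v}$, and lines are the cosets of 1-dimensional subspaces; $B_{q,v}=(q^{2v}-1)/(q-1)$ is the number of lines through any point. *)

From HB Require Import structures.
From mathcomp Require Import all_boot all_order all_algebra.
Set Implicit Arguments. Unset Strict Implicit. Unset Printing Implicit Defensive.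
Import GRing.Theory.
Local Open Scope ring_scope.

(* The line through x with direction d: the coset x + <d> (a line when d != 0). *)
Definition line (F : finFieldType) (n : nat) (x d : 'rV[F]_n) : {set 'rV[F]_n} :=
  [set x + t *: d | t : F].

Definition lines (F : finFieldType) (n : nat) : {set {set 'rV[F]_n}} :=
  [set line p.1 p.2 | p in [set p : 'rV[F]_n * 'rV[F]_n | p.2 != 0]].

Lemma half_ord_lt (v : nat) (j : 'I_(v.*2)) : (j./2 < v)%N.
Proof.
case: j => j hj /=; rewrite -ltn_double; apply: leq_ltn_trans hj.
by rewrite -{2}(odd_double_half j) leq_addl.
Qed.

Definition ohalf (v : nat) (j : 'I_(v.*2)) : 'I_v := Ordinal (half_ord_lt j).

(* The point (a_1, a_1^2, a_2, a_2^2, ..., a_v, a_v^2) of AG(2v,q):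
   coordinate 2i (0-based) is a_i, coordinate 2i+1 is a_i^2. *)
Definition Kpt (F : finFieldType) (v : nat) (a : {ffun 'I_v -> F}) : 'rV[F]_(v.*2) :=
  \row_(j < v.*2) (if odd j then a (ohalf j) ^+ 2 else a (ohalf j)).

Definition Kset (F : finFieldType) (v : nat) : {set 'rV[F]_(v.*2)} :=
  [set Kpt a | a : {ffun 'I_v -> F}].

Definition Aset (F : finFieldType) (v : nat) : {set 'rV[F]_(v.*2)} :=
  ~: Kset F v.

Definition Bqv (q v : nat) : nat := ((q ^ (2 * v) - 1) %/ (q - 1))%N.

From HB Require Import structures.
From mathcomp Require Import all_boot all_order all_algebra finfield.
From mathcomp Require Import ring zify.
Set Implicit Arguments. Unset Strict Implicit. Unset Printing Implicit Defensive.
Import GRing.Theory.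
Local Open Scope ring_scope.

(* Parametrize the line through X and a point P of K as X + l (P - X).  Writing
   d_i = x_(2i+1) - x_(2i)^2 for the coordinates of X, this point lies in K iff
   l = 1 or d_i + l (p_(2i) - x_(2i))^2 = 0 for every i.  Since X is not in K some
   d_i is nonzero, so besides l = 1 at most one parameter works: every line
   through X meets K in one or two points.  In characteristic 2 squaring is
   bijective, so every l outside {0, 1} is the second parameter of exactly one
   point of K; hence q - 2 points of K lie on the (q - 2)/2 secants through X, and
   X lies on q^v - (q - 2)/2 lines meeting K, out of B_(q,v) lines through X. *)

Section AffineLines.
Variables (F : finFieldType) (n : nat).
Implicit Types (x y z d : 'rV[F]_n) (S : {set 'rV[F]_n}).

Lemma line_scale x d c : c != 0 -> line x (c *: d) = line x d.
Proof.
move=> c0; apply/setP => y; apply/imsetP/imsetP => -[t _ ->].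
  by exists (t * c); rewrite ?scalerA.
by exists (t / c); rewrite ?scalerA ?divfK.
Qed.

Lemma line_shift x d t : line (x + t *: d) d = line x d.
Proof.
apply/setP => y; apply/imsetP/imsetP => -[s _ ->].
  by exists (t + s); rewrite ?scalerDl ?addrA.
by exists (s - t); rewrite // -addrA -scalerDl subrKC.
Qed.

Lemma line_param_inj x d : d != 0 -> injective (fun t : F => x + t *: d).
Proof.
move=> d0 s t /addrI /eqP; rewrite -subr_eq0 -scalerBl scaler_eq0 subr_eq0.
by rewrite (negPf d0) orbF => /eqP.
Qed.

Lemma card_line x d : d != 0 -> #|line x d| = #|F|.
Proof. by move=> d0; rewrite card_imset ?cardsT //; apply: line_param_inj. Qed.

Definition join x y := line x (y - x).

Lemma join_meml x y : x \in join x y.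
Proof. by apply/imsetP; exists 0; rewrite ?scale0r ?addr0. Qed.

Lemma join_memr x y : y \in join x y.
Proof. by apply/imsetP; exists 1; rewrite ?scale1r ?subrKC. Qed.

Lemma card_join x y : y != x -> #|join x y| = #|F|.
Proof. by rewrite -subr_eq0; apply: card_line. Qed.

Lemma join_eqr x y z : z != x -> (join x z == join x y) = (z \in join x y).
Proof.
move=> zx; apply/eqP/idP => [<-|/imsetP[t _ def_z]]; first exact: join_memr.
have t0 : t != 0 by apply: contraNneq zx => t0; rewrite def_z t0 scale0r addr0.
by rewrite /join def_z addrC addKr line_scale.
Qed.

Lemma lines_through_join x :
  [set L in lines F n | x \in L] = join x @: [set~ x].
Proof.
apply/setP => L; rewrite inE; apply/andP/imsetP => [[]|[y]].
  case/imsetP=> -[p d]; rewrite inE /= => d0 -> /imsetP[t _ def_x].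
  exists (x + d); last by rewrite /join addrC addKr def_x line_shift.
  by rewrite !inE -subr_eq0 addrC addKr.
rewrite !inE => yx ->; split; last exact: join_meml.
by apply/imsetP; exists (x, y - x); rewrite // inE subr_eq0.
Qed.

Lemma card_lines_through x :
  (#|[set L in lines F n | x \in L]| * #|F|.-1 = (#|F| ^ n).-1)%N.
Proof.
have -> : (#|F| ^ n).-1 = #|[set~ x]| by rewrite cardsC1 card_mx mul1n.
rewrite -[RHS]sum1_card (partition_big_imset (join x)) -lines_through_join.
rewrite -sum_nat_const /=.
apply: eq_bigr => L; rewrite lines_through_join => /imsetP[y]; rewrite !inE => yx ->.
rewrite sum1_card -(card_join yx) (cardsD1 x) join_meml add1n /=.
apply: eq_card => z; rewrite [RHS]unfold_in !inE.
by case: eqVneq => //= zx; rewrite join_eqr.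
Qed.

Lemma lines_through_avoiding x S : x \notin S ->
  [set L in lines F n | (x \in L) && (L \subset ~: S)] =
  [set L in lines F n | x \in L] :\: join x @: S.
Proof.
move=> xS; apply/setP => L; rewrite inE andbA in_setD [RHS]andbC.
have -> : (L \in lines F n) && (x \in L) = (L \in [set L in lines F n | x \in L]).
  by rewrite inE.
case: (boolP (L \in _)) => [|_ //]; rewrite lines_through_join /=.
case/imsetP=> y _ ->; apply/subsetP/negP => [sub /imsetP[z zS eq_join] | hS z zL].
  by have := sub z; rewrite eq_join join_memr inE zS => /(_ isT).
rewrite inE; apply/negP => zS; apply: hS; apply/imsetP; exists z => //.
by apply/esym/eqP; rewrite join_eqr // (memPn xS).
Qed.

Lemma card_lines_through_avoiding x S : x \notin S ->
  #|[set L in lines F n | (x \in L) && (L \subset ~: S)]| =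
  (#|[set L in lines F n | x \in L]| - #|join x @: S|)%N.
Proof.
move=> xS; rewrite lines_through_avoiding // cardsDS // lines_through_join.
by apply/subsetP=> _ /imsetP[y yS ->]; rewrite imset_f // !inE (memPn xS).
Qed.

End AffineLines.

Section CharTwoSqrt.
Variables (F : finFieldType) (char2 : 2 \in [pchar F]).

Lemma sqrf_inj : injective (fun x : F => x ^+ 2).
Proof. by move=> x y; rewrite -!(pFrobenius_autE char2); apply: fmorph_inj. Qed.

Definition sqrtf : F -> F := invF sqrf_inj.

Lemma sqrtfK x : sqrtf x ^+ 2 = x.
Proof. exact: (f_invF sqrf_inj). Qed.

End CharTwoSqrt.

Section PointsOfK.
Variables (F : finFieldType) (v : nat).
Implicit Types (Y : 'rV[F]_(v.*2)) (i : 'I_v).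

Lemma evi_subproof i : (i.*2 < v.*2)%N. Proof. by rewrite ltn_double. Qed.
Lemma odi_subproof i : (i.*2.+1 < v.*2)%N. Proof. by rewrite ltn_Sdouble. Qed.

Definition evi i : 'I_(v.*2) := Ordinal (evi_subproof i).
Definition odi i : 'I_(v.*2) := Ordinal (odi_subproof i).

Definition evc Y i := Y 0 (evi i).
Definition odc Y i := Y 0 (odi i).

Lemma ohalf_evi i : ohalf (evi i) = i.
Proof. by apply: val_inj; rewrite /= doubleK. Qed.

Lemma ohalf_odi i : ohalf (odi i) = i.
Proof. by apply: val_inj; rewrite /= uphalf_double. Qed.

Lemma evc_Kpt a i : evc (Kpt a) i = a i.
Proof. by rewrite /evc mxE /= odd_double ohalf_evi. Qed.

Lemma odc_Kpt a i : odc (Kpt a) i = a i ^+ 2.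
Proof. by rewrite /odc mxE /= odd_double ohalf_odi. Qed.

Lemma evc_comb Y Z l i :
  evc (Y + l *: (Z - Y)) i = evc Y i + l * (evc Z i - evc Y i).
Proof. by rewrite /evc !mxE. Qed.

Lemma odc_comb Y Z l i :
  odc (Y + l *: (Z - Y)) i = odc Y i + l * (odc Z i - odc Y i).
Proof. by rewrite /odc !mxE. Qed.

Lemma mem_Kset Y : (Y \in Kset F v) = [forall i, odc Y i == evc Y i ^+ 2].
Proof.
apply/imsetP/forallP => [[a _ ->] i|K_Y]; first by rewrite odc_Kpt evc_Kpt.
exists [ffun i => evc Y i] => //; apply/rowP => j; rewrite !mxE ffunE.
have -> : j = if odd j then odi (ohalf j) else evi (ohalf j).
  by apply: val_inj; rewrite -[LHS]odd_double_half; case: (odd j).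
by case: (odd j); rewrite /= odd_double /= ?ohalf_odi ?ohalf_evi //; apply/eqP/K_Y.
Qed.

Lemma card_Kset : #|Kset F v| = (#|F| ^ v)%N.
Proof.
rewrite card_imset ?card_ffun ?card_ord // => a b eq_ab.
by apply/ffunP => i; rewrite -evc_Kpt eq_ab evc_Kpt.
Qed.

End PointsOfK.

Section SecantsThroughX.
Variables (F : finFieldType) (v : nat) (X : 'rV[F]_(v.*2)).
Hypothesis XnotK : X \notin Kset F v.
Local Notation K := (Kset F v).
Implicit Types (P Q : 'rV[F]_(v.*2)) (l m : F).

Definition defect i := odc X i - evc X i ^+ 2.

Lemma exists_defect_neq0 : exists i, defect i != 0.
Proof.
move: XnotK; rewrite mem_Kset negb_forall => /existsP[i Xi].
by exists i; rewrite subr_eq0.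
Qed.

Lemma Kset_neqX P : P \in K -> P != X.
Proof. by apply: contraTneq => ->. Qed.

(* For l != 1: the point X + l *: (P - X) lies in K (Kset_join_param). *)
Definition hitK P l := [forall i, defect i + l * (evc P i - evc X i) ^+ 2 == 0].

Lemma hitK_neq0 P l : hitK P l -> l != 0.
Proof.
have [i di] := exists_defect_neq0; move=> /forallP/(_ i).
by apply: contraTneq => ->; rewrite mul0r addr0.
Qed.

Lemma hitK_uniq P l m : hitK P l -> hitK P m -> l = m.
Proof.
have [i di] := exists_defect_neq0; move=> /forallP/(_ i)/eqP hl /forallP/(_ i)/eqP hm.
set w := _ ^+ 2 in hl hm.
have w0 : w != 0 by apply: contraNneq di => w0; rewrite -hl w0 mulr0 addr0.
by apply: (mulIf w0); apply: (addrI (defect i)); rewrite hl hm.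
Qed.

Lemma Kset_join_param P l : P \in K ->
  (X + l *: (P - X) \in K) = (l == 1) || hitK P l.
Proof.
rewrite !mem_Kset => /forallP K_P; have [->|l1] := eqVneq l 1.
  by rewrite scale1r subrKC; apply/forallP.
apply: eq_forallb => i; rewrite evc_comb odc_comb (eqP (K_P i)).
rewrite -subr_eq0; set e := (X in X == 0).
have -> : e = (1 - l) * (defect i + l * (evc P i - evc X i) ^+ 2).
  by rewrite /e /defect; ring.
by rewrite mulf_eq0 subr_eq0 eq_sym (negPf l1).
Qed.

Definition secant P := [exists l, (l != 1) && hitK P l].

Lemma card_hit_params P : #|[pred l | (l == 1) || hitK P l]| = (secant P).+1.
Proof.
case: (boolP (secant P)) => [/existsP[l0 /andP[l01 hl0]] | nsec].
  rewrite (eq_card (_ : _ =i [set 1; l0])) ?cards2 1?eq_sym ?l01 // => l.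
  rewrite !inE; congr orb; apply/idP/eqP => [hl | ->//]; exact: hitK_uniq hl hl0.
rewrite (eq_card (_ : _ =i [set 1])) ?cards1 // => l; rewrite !inE.
case: eqVneq => //= l1; apply: contraNF nsec => hl.
by apply/existsP; exists l; rewrite l1.
Qed.

Lemma Kset_join P : P \in K ->
  K :&: join X P = [set X + l *: (P - X) | l in [pred l | (l == 1) || hitK P l]].
Proof.
move=> K_P; apply/setP => Q; rewrite inE.
apply/andP/imsetP => [[K_Q /imsetP[l _ def_Q]] | [l hl ->]].
  by exists l; rewrite // inE -Kset_join_param // -def_Q.
by rewrite Kset_join_param //; split=> //; apply: imset_f.
Qed.

Lemma card_Kset_join P : P \in K -> #|K :&: join X P| = (secant P).+1.
Proof.
move=> K_P; rewrite Kset_join // card_imset ?card_hit_params //.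
by apply: line_param_inj; rewrite subr_eq0 Kset_neqX.
Qed.

(* A line through X meeting K carries weight 2 whether it meets K once or twice. *)
Lemma sum_not_secant : (\sum_(Q in K) (2 - secant Q) = #|join X @: K| * 2)%N.
Proof.
rewrite (partition_big_imset (join X)) -sum_nat_const /=.
apply: eq_bigr => _ /imsetP[P K_P ->].
rewrite (eq_bigl [in K :&: join X P]) => [|Q]; last first.
  by rewrite !inE; case: (boolP (Q \in K)) => //= /Kset_neqX; apply: join_eqr.
rewrite (eq_bigr (fun=> 2 - secant P)%N) => [|Q /setIP[K_Q PQ]].
  by rewrite sum_nat_const card_Kset_join //; case: (secant P).
have /eqP eq_join : join X Q == join X P by rewrite join_eqr ?Kset_neqX.
by have := card_Kset_join K_Q; rewrite eq_join card_Kset_join // => -[->].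
Qed.

Lemma card_secant (char2 : 2 \in [pchar F]) :
  #|[set Q in K | secant Q]| = (#|F| - 2)%N.
Proof.
pose pt l := Kpt [ffun i => evc X i + sqrtf char2 (- defect i / l)].
have hit_pt l : l != 0 -> hitK (pt l) l.
  move=> l0; apply/forallP => i.
  rewrite evc_Kpt ffunE [evc X i + _]addrC addrK sqrtfK.
  by rewrite mulrCA mulfV // mulr1 addrN.
have -> : [set Q in K | secant Q] = pt @: ~: [set 0; 1].
  apply/setP => Q; rewrite inE; apply/andP/imsetP => [[/imsetP[a _ ->]] | [l]].
    case/existsP=> l /andP[l1 hl]; have l0 := hitK_neq0 hl.
    exists l; first by rewrite !inE negb_or l0.
    congr Kpt; apply/ffunP => i; rewrite ffunE -[a i](subrKC (evc X i)).
    congr (_ + _); apply: (sqrf_inj char2); rewrite sqrtfK /= -evc_Kpt.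
    apply: (mulfI l0); rewrite [RHS]mulrCA mulfV // mulr1; apply/eqP.
    by rewrite -addr_eq0 addrC; move/forallP/(_ i): hl.
  rewrite !inE negb_or => /andP[l0 l1] ->; split; first by apply/imsetP; eexists.
  by apply/existsP; exists l; rewrite l1 hit_pt.
rewrite card_in_imset => [|l m]; last first.
  rewrite !inE !negb_or => /andP[l0 _] /andP[m0 _] eq_pt.
  by apply: hitK_uniq (hit_pt l l0) _; rewrite eq_pt hit_pt.
by rewrite cardsCs setCK cards2 eq_sym oner_neq0.
Qed.

Lemma card_joins_Kset (char2 : 2 \in [pchar F]) :
  (#|join X @: K| * 2 + (#|F| - 2) = #|F| ^ v * 2)%N.
Proof.
have card_sec : #|[set Q in K | secant Q]| = (\sum_(Q in K) secant Q)%N.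
  rewrite -sum1_card big_mkcond [RHS]big_mkcond; apply: eq_bigr => Q _.
  by rewrite inE; case: (Q \in K); case: (secant Q).
rewrite -sum_not_secant -(card_secant char2) card_sec -big_split -card_Kset.
by rewrite -sum_nat_const; apply: eq_bigr => Q _; case: (secant Q).
Qed.

End SecantsThroughX.

Theorem proposition12 (F : finFieldType) (k v : nat) (hq : #|F| = (2 ^ k)%N)
  (hv : (1 <= v)%N) (X : 'rV[F]_(v.*2)) (hX : X \in Aset F v) :
  #|[set L in lines F (v.*2) | (X \in L) && (L \subset Aset F v)]|
  = (Bqv #|F| v - #|F| ^ v + (#|F| - 2)./2)%N.
Proof.
have char2 : 2 \in [pchar F] by exact: card_finPcharP hq _.
have XnotK : X \notin Kset F v by rewrite inE in hX.
have q_gt1 := finNzRing_gt1 F.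
have q_even : ~~ odd #|F| by move: (q_gt1); rewrite hq oddX orbF; case: k {hq}.
have lines_X := card_lines_through X.
have joins_K := card_joins_Kset XnotK char2.
have -> : Bqv #|F| v = #|[set L in lines F v.*2 | X \in L]|.
  by rewrite /Bqv mul2n !subn1 -lines_X mulnK // -subn1 subn_gt0.
rewrite card_lines_through_avoiding //.
have q_le : (#|F| <= #|F| ^ v)%N by rewrite -{1}(expn1 #|F|) leq_pexp2l // ltnW.
have sq_qv : (#|F| ^ v.*2 = #|F| ^ v * #|F| ^ v)%N by rewrite -addnn expnD.
rewrite sq_qv in lines_X.
have QL : (#|F| ^ v <= #|[set L in lines F v.*2 | X \in L]|)%N.
  rewrite -(@leq_pmul2r #|F|.-1) -?subn1 ?subn_gt0 // subn1 lines_X.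
  move: q_gt1 q_le; set Q := (#|F| ^ v)%N; nia.
move: joins_K QL; rewrite -[in (#|F| - 2)%N](odd_double_half #|F|) (negPf q_even) /=.
set Q := (#|F| ^ v)%N; lia.
Qed.
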